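(* Let $\mathcal{O}$ be a complete discrete valuation ring with field of fractions $K$. Consider the game of degree $d = 3$ in which Nora and Wanda choose the polynomial coefficients from $\mathcal{O}$. Then Wanda has a winning strategy (whether she moves first or second), i.e. she can always ensure that the final polynomial has a root in $K$.
   Context: The game: Nora and Wanda alternately choose coefficients of $f(x) = a_3 x^3 + a_2 x^2 + a_1 x + a_0$; on each move the current player picks a not-yet-chosen coefficient and assigns it a value in $\mathcal{O}$, subject to $a_3 \neq 0$, $a_0 \neq 0$. After all four coefficients are chosen, Wanda wins if $f$ has a root in $K = \operatorname{Frac}(\mathcal{O})$, and Nora wins otherwise. *)

From HB Require Import structures.
From mathcomp Require Import all_boot all_order all_algebra.
Set Implicit Arguments. Unset Strict Implicit. Unset Printing Implicit Defensive.
Import Order.TTheory GRing.Theory Num.Theory.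
Local Open Scope ring_scope.

(* A discrete valuation on the integral domain O, defined on nonzero
   elements (its value on 0 is irrelevant), normalized (a uniformizer has
   valuation 1), and such that O is its full valuation ring: whenever
   v a <= v b, a divides b in O.  Together these say exactly that O is a
   discrete valuation ring with normalized valuation v. *)
Record is_dvr (O : idomainType) (v : O -> nat) : Prop := {
  dvr_mul : forall a b : O, a != 0 -> b != 0 -> v (a * b) = (v a + v b)%N;
  dvr_add : forall a b : O, a != 0 -> b != 0 -> (a + b)%R != 0%R ->
              (minn (v a) (v b) <= v (a + b)%R)%N;
  dvr_unif : exists p : O, p != 0 /\ v p = 1%N;
  dvr_div : forall a b : O, a != 0 -> b != 0 -> (v a <= v b)%N ->
              exists c : O, b = a * c
}.

(* x lies in m^N, m the maximal ideal *)
Definition in_mpow (O : idomainType) (v : O -> nat) (N : nat) (x : O) : Prop :=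
  x = 0 \/ (N <= v x)%N.

Definition dvr_complete (O : idomainType) (v : O -> nat) : Prop :=
  forall u : nat -> O,
    (forall N, exists M, forall m n, (M <= m)%N -> (M <= n)%N ->
        in_mpow v N (u m - u n)) ->
    exists l : O, forall N, exists M, forall n, (M <= n)%N ->
        in_mpow v N (u n - l).

Definition is_complete_dvr (O : idomainType) (v : O -> nat) : Prop :=
  is_dvr v /\ dvr_complete v.

Definition gstate (O : idomainType) := 'I_4 -> option O.

Definition legal_move (O : idomainType) (s : gstate O) (i : 'I_4) (c : O) : Prop :=
  s i = None /\ (((i == 0 :> nat) || (i == 3 :> nat)) -> c != 0).

Definition play (O : idomainType) (s : gstate O) (i : 'I_4) (c : O) : gstate O :=
  fun j => if j == i then Some c else s j.

Definition final_poly (O : idomainType) (s : gstate O) : {poly {fraction O}} :=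
  \poly_(i < 4) (tofrac (odflt 0 (s (inord i)))).

Definition wanda_wins_final (O : idomainType) (s : gstate O) : Prop :=
  exists x : {fraction O}, root (final_poly s) x.

(* wanda_can_win n s w : from state s with n moves remaining, where w says
   whether it is Wanda's turn, Wanda has a strategy guaranteeing a win.
   (Standard backward-induction formulation of "has a winning strategy" for
   a finite game of perfect information.) *)
Fixpoint wanda_can_win (O : idomainType) (n : nat) (s : gstate O) (w : bool) : Prop :=
  match n with
  | 0%N => wanda_wins_final s
  | n'.+1 =>
      if w then exists i c, legal_move s i c /\ wanda_can_win n' (play s i c) false
      else forall i c, legal_move s i c -> wanda_can_win n' (play s i c) true
  end.

Definition empty_state (O : idomainType) : gstate O := fun _ => None.

(* Over a complete discrete valuation ring O with uniformizer p, a cubic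
   c0 + x + c2 x^2 + c3 x^3 has a root in O as soon as c0 or both c2 and c3
   lie in the maximal ideal m: in the second case x |-> -(c0 + c2 x^2 + c3 x^3)
   is a contraction for the m-adic metric, and the first case reduces to it
   by substituting x = p y.

   Moving first, Wanda sets a1 = 1 and then puts p at whichever end, a0 or a3,
   is still free.  With a0 = p the cubic has a root by the above.  With a3 = p
   it does too if a2 is in m; otherwise a2 is a unit and the reversed cubic
   p + a2 y + y^2 + a0 y^3, after division by a2, has a nonzero root y, so
   1/y is a root in K.

   Moving second, Wanda makes the last move and only needs that one: a free
   middle coefficient can be chosen to make 1 a root; a free end coefficient
   can be chosen nonzero so that t or 1/t is a root, where t is any nonzero
   element at which a nonzero quadratic does not vanish (one of 1, p, p^2). *)
From mathcomp Require Import all_boot all_order all_algebra.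
From mathcomp Require Import ring.
Set Implicit Arguments. Unset Strict Implicit. Unset Printing Implicit Defensive.
Import GRing.Theory.
Local Open Scope ring_scope.

Section Valuation.

Variables (O : idomainType) (v : O -> nat).
Hypothesis hv : is_dvr v.
Local Notation m := (in_mpow v).

Lemma dvr_v1 : v 1 = 0%N.
Proof.
have := dvr_mul hv (oner_neq0 O) (oner_neq0 O).
by rewrite mulr1 -{1}[v 1]addn0 => /addnI.
Qed.

Lemma in_mpow0 N : m N 0. Proof. by left. Qed.

Lemma in_mpow_trivial x : m 0 x. Proof. by right. Qed.

Lemma in_mpowW N M x : (N <= M)%N -> m M x -> m N x.
Proof. by move=> le_NM [->|le_Mx]; [left | right; apply: leq_trans le_Mx]. Qed.

Lemma in_mpow_eq0 x : (forall N, m N x) -> x = 0.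
Proof. by move=> mx; case: (mx (v x).+1) => //; rewrite ltnn. Qed.

Lemma in_mpowD N x y : m N x -> m N y -> m N (x + y).
Proof.
case: (eqVneq x 0) => [-> _|x0]; first by rewrite add0r.
case: (eqVneq y 0) => [-> + _|y0]; first by rewrite addr0.
case: (eqVneq (x + y) 0) => [-> _ _|xy0]; first exact: in_mpow0.
case=> [/eqP|Nx]; first by rewrite (negbTE x0).
case=> [/eqP|Ny]; first by rewrite (negbTE y0).
by right; apply: leq_trans (dvr_add hv x0 y0 xy0); rewrite leq_min Nx Ny.
Qed.

Lemma in_mpowM N M x y : m N x -> m M y -> m (N + M) (x * y).
Proof.
case=> [->|Nx]; first by rewrite mul0r; left.
case=> [->|My]; first by rewrite mulr0; left.
case: (eqVneq x 0) => [->|x0]; first by rewrite mul0r; left.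
case: (eqVneq y 0) => [->|y0]; first by rewrite mulr0; left.
by right; rewrite (dvr_mul hv x0 y0) leq_add.
Qed.

Lemma in_mpowMr N x y : m N x -> m N (x * y).
Proof. by move=> Nx; rewrite -[N]addn0; apply: in_mpowM Nx (in_mpow_trivial y). Qed.

Lemma in_mpowMl N x y : m N y -> m N (x * y).
Proof. by rewrite mulrC; apply: in_mpowMr. Qed.

Lemma in_mpowN N x : m N x -> m N (- x).
Proof. by rewrite -mulN1r; apply: in_mpowMl. Qed.

Lemma in_mpowB N x y : m N x -> m N y -> m N (x - y).
Proof. by move=> Nx Ny; apply: in_mpowD Nx (in_mpowN Ny). Qed.

Lemma dvr_v0_unit a : a != 0 -> v a = 0%N -> exists e, a * e = 1.
Proof.
move=> a0 va; have [e e1] : exists e, 1 = a * e.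
  by apply: (dvr_div hv a0 (oner_neq0 O)); rewrite va.
by exists e; rewrite -e1.
Qed.

Lemma exists_nonzero_nonroot (q : {poly O}) :
  q != 0 -> (size q <= 3)%N -> exists2 t, t != 0 & ~~ root q t.
Proof.
move=> q0 size_q; have [p [p0 vp]] := dvr_unif hv.
have vpp : v (p * p) = 2%N by rewrite (dvr_mul hv p0 p0) vp.
pose s := [:: 1; p; p * p].
have s_nz : 0 \notin s by rewrite !inE !negb_or eq_sym oner_neq0 eq_sym p0 eq_sym mulf_neq0.
have s_uniq : uniq s.
  rewrite /= !inE !negb_or andbT -andbA.
  by apply/and3P; split; apply/eqP => /(congr1 v); rewrite ?dvr_v1 ?vp ?vpp.
have /hasP [t st qt] : has (predC (root q)) s.
  by rewrite has_predC; apply: contra (max_poly_roots q0 ^~ s_uniq) _; rewrite -leqNgt.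
by exists t => //; apply: contraNneq s_nz => <-.
Qed.

Lemma exists_nonzero_const_cubic_root b1 b2 b3 : b3 != 0 ->
  exists (t c : O), [/\ t != 0, c != 0 & c + b1 * t + b2 * t ^+ 2 + b3 * t ^+ 3 = 0].
Proof.
move=> b30; pose q := Poly [:: b1; b2; b3].
have q0 : q != 0.
  by apply: contra_neq b30 => q0; rewrite -[b3]/([:: b1; b2; b3]`_2) -coef_Poly -/q q0 coef0.
have [t t0 qt] := exists_nonzero_nonroot q0 (size_Poly _).
exists t, (- (t * q.[t])); split => //; first by rewrite oppr_eq0 mulf_neq0.
by rewrite horner_Poly /=; ring.
Qed.

Hypothesis hc : dvr_complete v.

Lemma contraction_fixpoint (T : O -> O) :
  (forall N x y, m N (x - y) -> m N.+1 (T x - T y)) -> exists l, T l = l.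
Proof.
move=> contrT; pose u n := iter n T 0.
have u_step n : m n (u n.+1 - u n).
  by elim: n => [|n IH]; [apply: in_mpow_trivial | apply: contrT IH].
have u_cauchy M n : (M <= n)%N -> m M (u n - u M).
  elim: n => [|n IH]; first by rewrite leqn0 => /eqP ->; rewrite subrr; left.
  rewrite leq_eqVlt => /predU1P [<-|]; first by rewrite subrr; left.
  rewrite ltnS -(subrKA (u n)) => le_Mn.
  exact: in_mpowD (in_mpowW le_Mn (u_step n)) (IH le_Mn).
have [l ul] : exists l, forall N, exists M, forall n, (M <= n)%N -> m N (u n - l).
  apply: hc => N; exists N => a b Na Nb.
  have -> : u a - u b = (u a - u N) - (u b - u N) by ring.
  exact: in_mpowD (u_cauchy _ _ Na) (in_mpowN (u_cauchy _ _ Nb)).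
exists l; apply/eqP; rewrite -subr_eq0; apply/eqP/in_mpow_eq0 => N.
have [M uM] := ul N.
have -> : T l - l = (u M.+1 - l) - (T (u M) - T l) by rewrite /=; ring.
apply: in_mpowB (uM _ (leqnSn M)) _.
exact: in_mpowW (leqnSn N) (contrT _ _ _ (uM M (leqnn M))).
Qed.

Lemma cubic_root_small_higher c0 c2 c3 : m 1 c2 -> m 1 c3 ->
  exists x, c0 + x + c2 * x ^+ 2 + c3 * x ^+ 3 = 0.
Proof.
move=> m_c2 m_c3; pose T x := - (c0 + c2 * x ^+ 2 + c3 * x ^+ 3).
have [l Tl] : exists l, T l = l.
  apply: contraction_fixpoint => N x y Nxy.
  have -> : T x - T y = - ((x - y) * (c2 * (x + y) + c3 * (x * x + x * y + y * y))).
    by rewrite /T; ring.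
  rewrite -addn1; apply/in_mpowN/(in_mpowM Nxy).
  exact: in_mpowD (in_mpowMr _ m_c2) (in_mpowMr _ m_c3).
by exists l; rewrite -{1}Tl /T; ring.
Qed.

Lemma cubic_root_small_const c0 c2 c3 : m 1 c0 ->
  exists x, c0 + x + c2 * x ^+ 2 + c3 * x ^+ 3 = 0.
Proof.
case: (eqVneq c0 0) => [-> _|c00 m_c0]; first by exists 0; ring.
have [p [p0 vp]] := dvr_unif hv.
have m_p : m 1 p by right; rewrite vp.
have [d ->] : exists d, c0 = p * d.
  by apply: (dvr_div hv p0 c00); rewrite vp; case: m_c0 => // /eqP; rewrite (negbTE c00).
have [y y_root] :=
  cubic_root_small_higher d (in_mpowMr c2 m_p) (in_mpowMr c3 (in_mpowMr p m_p)).
exists (p * y).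
have -> : p * d + p * y + c2 * (p * y) ^+ 2 + c3 * (p * y) ^+ 3
  = p * (d + y + p * c2 * y ^+ 2 + p * p * c3 * y ^+ 3) by ring.
by rewrite y_root mulr0.
Qed.

Lemma cubic_root_small_lead a0 a2 p : p != 0 -> m 1 p ->
  (exists x, a0 + x + a2 * x ^+ 2 + p * x ^+ 3 = 0) \/
  (exists2 y, y != 0 & p + a2 * y + y ^+ 2 + a0 * y ^+ 3 = 0).
Proof.
move=> p0 m_p; have [m_a2|[a2_0 va2]] : m 1 a2 \/ a2 != 0 /\ v a2 = 0%N.
- case: (eqVneq a2 0) => [->|a2_0]; first by left; left.
  by case: (posnP (v a2)) => va2; [right | left; right].
- by left; apply: cubic_root_small_higher.
right; have [e a2e] := dvr_v0_unit a2_0 va2.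
have [y y_root] := cubic_root_small_const e (e * a0) (in_mpowMl e m_p).
have reversed_root : p + a2 * y + y ^+ 2 + a0 * y ^+ 3 = 0.
  transitivity ((a2 * e) * (p + y ^+ 2 + a0 * y ^+ 3) + a2 * y); first by rewrite a2e; ring.
  by rewrite -(mulr0 a2) -y_root; ring.
exists y => //; apply: contra_neq p0 => y0.
by move: reversed_root; rewrite y0 !expr0n /= !mulr0 !addr0.
Qed.

End Valuation.

Lemma exists_notin (T : finType) (s : seq T) : (size s < #|T|)%N -> exists x, x \notin s.
Proof.
move=> small_s; case: (pickP (predC (mem s))) => [x sx|s_full]; first by exists x.
have : (#|T| <= size s)%N.
  apply: leq_trans (card_size s); apply: subset_leq_card.
  by apply/subsetP => x _; move/negbFE: (s_full x).
by rewrite leqNgt small_s.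
Qed.

Lemma ord4_cases (j : 'I_4) :
  [\/ j = inord 0, j = inord 1, j = inord 2 | j = inord 3].
Proof.
case: j => [[|[|[|[|//]]]] lt_j4];
  [apply: Or41 | apply: Or42 | apply: Or43 | apply: Or44];
  by apply: val_inj; rewrite /= inordK.
Qed.

Lemma inord4_eq k r : (k < 4)%N -> (r < 4)%N -> ((inord k : 'I_4) == inord r) = (k == r).
Proof. by move=> lt_k4 lt_r4; rewrite -val_eqE /= !inordK. Qed.

Lemma cubic_reciprocal (F : fieldType) (y a0 a1 a2 a3 : F) : y != 0 ->
  a0 + a1 * y^-1 + a2 * y^-1 ^+ 2 + a3 * y^-1 ^+ 3
  = (a3 + a2 * y + a1 * y ^+ 2 + a0 * y ^+ 3) / y ^+ 3.
Proof. by move=> y0; field. Qed.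

Section Game.

Variable O : idomainType.
Implicit Types (s : gstate O) (i j : 'I_4) (a c : O).
Local Notation "x %:F" := (@tofrac O x).

Definition gcoef s (k : nat) : O := odflt 0 (s (inord k)).

Lemma gcoef_Some s k a : s (inord k) = Some a -> gcoef s k = a.
Proof. by rewrite /gcoef => ->. Qed.

Lemma gcoef_None s k : s (inord k) = None -> gcoef s k = 0.
Proof. by rewrite /gcoef => ->. Qed.

Lemma play_neq s i c j : j != i -> play s i c j = s j.
Proof. by rewrite /play => /negbTE ->. Qed.

Lemma play_persist s i c j a : legal_move s i c -> s j = Some a -> play s i c j = Some a.
Proof.
by move=> [si _] sj; rewrite play_neq //; apply: contraTneq isT => ji; rewrite ji si in sj.
Qed.

Lemma play_eq s i c : play s i c i = Some c.
Proof. by rewrite /play eqxx. Qed.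

Lemma gcoef_play s r c k : (r < 4)%N -> (k < 4)%N ->
  gcoef (play s (inord r) c) k = if k == r then c else gcoef s k.
Proof. by move=> lt_r4 lt_k4; rewrite /gcoef /play inord4_eq //; case: eqP. Qed.

Lemma horner_final_poly s x :
  (final_poly s).[x] = (gcoef s 0)%:F + (gcoef s 1)%:F * x
                       + (gcoef s 2)%:F * x ^+ 2 + (gcoef s 3)%:F * x ^+ 3.
Proof.
rewrite /final_poly horner_poly !big_ord_recl big_ord0 /gcoef /=.
by rewrite /bump /= expr0 expr1 mulr1 addr0 !addrA.
Qed.

Lemma wins_root s (x : O) :
  gcoef s 0 + gcoef s 1 * x + gcoef s 2 * x ^+ 2 + gcoef s 3 * x ^+ 3 = 0 ->
  wanda_wins_final s.
Proof.
move=> sx; exists x%:F; apply/eqP.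
by rewrite horner_final_poly -!tofracXn -!tofracM -!tofracD sx tofrac0.
Qed.

Lemma wins_reciprocal_root s (y : O) : y != 0 ->
  gcoef s 3 + gcoef s 2 * y + gcoef s 1 * y ^+ 2 + gcoef s 0 * y ^+ 3 = 0 ->
  wanda_wins_final s.
Proof.
move=> y0 sy; exists (y%:F)^-1; apply/eqP.
have yF : y%:F != 0 by rewrite tofrac_eq0.
rewrite horner_final_poly cubic_reciprocal //.
by rewrite -!tofracXn -!tofracM -!tofracD sy tofrac0 mul0r.
Qed.

Definition ends_nonzero s :=
  forall j a, s j = Some a -> ((j == 0 :> nat) || (j == 3 :> nat)) -> a != 0.

Lemma ends_nonzero_empty : ends_nonzero (empty_state O).
Proof. by []. Qed.

Lemma ends_nonzero_play s i c : ends_nonzero s -> legal_move s i c -> ends_nonzero (play s i c).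
Proof.
move=> nz_s [_ nz_c] j a; rewrite /play; case: eqP => [-> [<-]|_]; first exact: nz_c.
exact: nz_s.
Qed.

End Game.

Section Strategies.

Variables (O : idomainType) (v : O -> nat).
Hypothesis hv : is_dvr v.
Implicit Types (s : gstate O) (a : O).

Lemma wanda_wins_middle_free s k : (k == 1)%N || (k == 2)%N ->
  s (inord k) = None -> wanda_can_win 1 s true.
Proof.
move=> k12 sk; have lt_k4 : (k < 4)%N by case/orP: k12 => /eqP ->.
exists (inord k), (- (gcoef s 0 + gcoef s 1 + gcoef s 2 + gcoef s 3)); split.
  by split=> //; rewrite inordK // => k03; case/orP: k12 k03 => /eqP ->.
apply: (wins_root (x := 1)); move: (gcoef_None sk).
by case/orP: k12 => /eqP -> sk0; rewrite !gcoef_play //= sk0; ring.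
Qed.

Lemma wanda_wins_ends_free s : s (inord 0) = None -> s (inord 3) = None ->
  wanda_can_win 1 s true.
Proof.
move=> s0 s3; exists (inord 3), 1; split; first by split=> // _; apply: oner_neq0.
by apply: (wins_root (x := 0)); rewrite !gcoef_play //= (gcoef_None s0); ring.
Qed.

Lemma wanda_wins_const_free s a : s (inord 0) = None -> s (inord 3) = Some a ->
  a != 0 -> wanda_can_win 1 s true.
Proof.
move=> s0 s3 a0.
have [t [c [t0 c0 tc]]] := exists_nonzero_const_cubic_root hv (gcoef s 1) (gcoef s 2) a0.
exists (inord 0), c; split; first by split.
by apply: (wins_root (x := t)); rewrite !gcoef_play //= (gcoef_Some s3).
Qed.

Lemma wanda_wins_lead_free s a : s (inord 3) = None -> s (inord 0) = Some a ->
  a != 0 -> wanda_can_win 1 s true.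
Proof.
move=> s3 s0 a0.
have [t [c [t0 c0 tc]]] := exists_nonzero_const_cubic_root hv (gcoef s 2) (gcoef s 1) a0.
exists (inord 3), c; split; first by split.
by apply: (wins_reciprocal_root t0); rewrite !gcoef_play //= (gcoef_Some s0).
Qed.

Lemma wanda_wins_last_move s j : ends_nonzero s -> s j = None -> wanda_can_win 1 s true.
Proof.
move=> nz_s; have nz_end k a : (k == 0)%N || (k == 3)%N -> s (inord k) = Some a -> a != 0.
  by move=> k03 sk; apply: nz_s sk _; rewrite inordK //; case/orP: k03 => /eqP ->.
case: (ord4_cases j) => -> sj.
- case s3: (s (inord 3)) => [a|]; last exact: wanda_wins_ends_free.
  by apply: wanda_wins_const_free sj s3 (nz_end 3%N _ _ s3).
- exact: wanda_wins_middle_free sj.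
- exact: wanda_wins_middle_free sj.
- case s0: (s (inord 0)) => [a|]; last exact: wanda_wins_ends_free.
  by apply: wanda_wins_lead_free sj s0 (nz_end 0%N _ _ s0).
Qed.

Hypothesis hc : dvr_complete v.
Local Notation m := (in_mpow v).

Lemma nora_last_move_small_const s a : s (inord 1) = Some 1 -> s (inord 0) = Some a ->
  m 1 a -> wanda_can_win 1 s false.
Proof.
move=> s1 s0 m_a i c l.
have [x x_root] :=
  cubic_root_small_const hv hc (gcoef (play s i c) 2) (gcoef (play s i c) 3) m_a.
apply: (wins_root (x := x)).
by rewrite (gcoef_Some (play_persist l s1)) (gcoef_Some (play_persist l s0)) mul1r.
Qed.

Lemma nora_last_move_small_lead s a : s (inord 1) = Some 1 -> s (inord 3) = Some a ->
  a != 0 -> m 1 a -> wanda_can_win 1 s false.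
Proof.
move=> s1 s3 a0 m_a i c l.
have [[x x_root]|[y y0 y_root]] :=
  cubic_root_small_lead hv hc (gcoef (play s i c) 0) (gcoef (play s i c) 2) a0 m_a.
- apply: (wins_root (x := x)).
  by rewrite (gcoef_Some (play_persist l s1)) (gcoef_Some (play_persist l s3)) mul1r.
- apply: (wins_reciprocal_root y0).
  by rewrite (gcoef_Some (play_persist l s1)) (gcoef_Some (play_persist l s3)) mul1r.
Qed.

Lemma wanda_wins_first : wanda_can_win 4 (empty_state O) true.
Proof.
have [p [p0 vp]] := dvr_unif hv; have m_p : m 1 p by right; rewrite vp.
exists (inord 1), 1; split; first by split=> // _; apply: oner_neq0.
move=> i2 c2 l2; have a1_one := play_persist l2 (play_eq _ _ _).
case s0: (play (play (empty_state O) (inord 1) 1) i2 c2 (inord 0)) => [a|].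
- have i20 : i2 = inord 0.
    by move: s0; rewrite /play inord4_eq //=; case: eqP.
  have s3 : play (play (empty_state O) (inord 1) 1) i2 c2 (inord 3) = None.
    by rewrite i20 /play !inord4_eq.
  have l3 : legal_move (play (play (empty_state O) (inord 1) 1) i2 c2) (inord 3) p.
    by split=> // _.
  exists (inord 3), p; split=> //.
  exact: nora_last_move_small_lead (play_persist l3 a1_one) (play_eq _ _ _) p0 m_p.
- have l3 : legal_move (play (play (empty_state O) (inord 1) 1) i2 c2) (inord 0) p.
    by split=> // _.
  exists (inord 0), p; split=> //.
  exact: nora_last_move_small_const (play_persist l3 a1_one) (play_eq _ _ _) m_p.
Qed.

Lemma wanda_wins_second : wanda_can_win 4 (empty_state O) false.
Proof.
move=> i1 c1 l1.
have [i2] : exists i2, i2 \notin [:: i1] by apply: exists_notin; rewrite card_ord.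
rewrite inE => i2_neq.
have l2 : legal_move (play (empty_state O) i1 c1) i2 1.
  by split; [rewrite play_neq | move=> _; apply: oner_neq0].
exists i2, 1; split=> // i3 c3 l3.
have [j] : exists j, j \notin [:: i1; i2; i3] by apply: exists_notin; rewrite card_ord.
rewrite !inE !negb_or => /and3P [j1 j2 j3].
have nz := ends_nonzero_play
  (ends_nonzero_play (ends_nonzero_play (@ends_nonzero_empty O) l1) l2) l3.
have j_free : play (play (play (empty_state O) i1 c1) i2 1) i3 c3 j = None.
  by rewrite !play_neq.
exact: wanda_wins_last_move nz j_free.
Qed.

End Strategies.

Theorem proposition3 (O : idomainType) (v : O -> nat) :
  is_complete_dvr v ->
  forall wanda_first : bool, wanda_can_win 4 (empty_state O) wanda_first.
Proof.
move=> [hv hc] [].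
- exact: wanda_wins_first hv hc.
- exact: wanda_wins_second hv.
Qed.
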